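(* Let $M=B\circ S$ and $x,x'\in\mathbb X$. Let $A_1,\dots,A_I$ and $E_1,\dots,E_J$ be two partitions of $\mathbb Y$ into disjoint sets such that $\Pr[S(x)\in A_i]>0$ for all $i$ and $\Pr[S(x')\in E_j]>0$ for all $j$. Let $\gamma$ be any coupling between the $I+J$ conditional pmfs $s_x(\cdot\mid A_1),\dots,s_x(\cdot\mid A_I),s_{x'}(\cdot\mid E_1),\dots,s_{x'}(\cdot\mid E_J)$, viewed as a pmf on tuples $(\mathbf y^{(1)},\mathbf y^{(2)})\in\mathbb Y^I\times\mathbb Y^J$. Then $$\Psi_\alpha(m_x\|m_{x'})\le\sum_{(\mathbf y^{(1)},\mathbf y^{(2)})\in\mathbb Y^{I+J}} c_\alpha(\mathbf y^{(1)},\mathbf y^{(2)})\,\gamma(\mathbf y^{(1)},\mathbf y^{(2)}),$$ where $$c_\alpha(\mathbf y^{(1)},\mathbf y^{(2)})=\Psi_\alpha\Big(\sum_{i=1}^I b_{y^{(1)}_i}\Pr[S(x)\in A_i]\ \Big\|\ \sum_{j=1}^J b_{y^{(2)}_j}\Pr[S(x')\in E_j]\Big).$$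
   Context: Setting: $\mathbb A$ is a finite set, the dataset space $\mathbb X\subseteq\mathcal P(\mathbb A)$, and $\mathbb Y$ is a finite batch space. A subsampling scheme $S$ assigns to each dataset $x$ a pmf $s_x$ on $\mathbb Y$; $\Pr[S(x)\in A]=\sum_{y\in A}s_x(y)$ and $s_x(y\mid A)=s_x(y)\mathbb 1[y\in A]/\Pr[S(x)\in A]$. A base mechanism $B$ assigns to each batch $y$ a probability density $b_y$ on $\mathbb R^D$. The subsampled mechanism $M=B\circ S$ has density $m_x(z)=\sum_{y}b_y(z)s_x(y)$. $H_\alpha(p\|q)=\int\max\{p-\alpha q,0\}dz$ ($\alpha\ge0$), $\Lambda_\alpha(p\|q)=\int p^\alpha q^{1-\alpha}dz$ ($\alpha>1$); $\Psi_\alpha$ denotes either $H_\alpha$ with $\alpha\ge0$ or $\Lambda_\alpha$ with $\alpha>1$. A coupling between pmfs $p_1,\dots,p_N$ on $\mathbb Y$ is a pmf on $\mathbb Y^N$ whose $n$-th marginal is $p_n$. *)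

From HB Require Import structures.
From mathcomp Require Import all_boot all_order all_algebra.
From mathcomp Require Import all_classical all_reals all_analysis.
Set Implicit Arguments. Unset Strict Implicit. Unset Printing Implicit Defensive.
Import Order.TTheory GRing.Theory Num.Theory.
Local Open Scope ring_scope.

(* Which divergence Psi_alpha is meant:
   HS  = hockey-stick H_alpha(p||q) = \int max{p - alpha q, 0}   (alpha >= 0)
   REN = Lambda_alpha(p||q) = \int p^alpha q^(1-alpha)           (alpha > 1) *)
Inductive divkind := HS | REN.

Definition alpha_ok {R : realType} (k : divkind) (alpha : R) : Prop :=
  match k with HS => 0 <= alpha | REN => 1 < alpha end.

(* integrand of Lambda_alpha, with the usual conventions
   0^alpha 0^(1-alpha) = 0 and a^alpha 0^(1-alpha) = +oo for a > 0 *)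
Definition lam_integrand {R : realType} (alpha a b : R) : \bar R :=
  if b == 0 then (if a == 0 then 0%E else +oo%E)
  else ((a `^ alpha) * (b `^ (1 - alpha)))%:E.

Definition Psi {R : realType} {d} {T : measurableType d}
  (mu : {measure set T -> \bar R}) (k : divkind) (alpha : R)
  (p q : T -> R) : \bar R :=
  match k with
  | HS => (\int[mu]_z (Num.max (p z - alpha * q z) 0)%:E)%E
  | REN => (\int[mu]_z lam_integrand alpha (p z) (q z))%E
  end.

Definition is_density {R : realType} {d} {T : measurableType d}
  (mu : {measure set T -> \bar R}) (f : T -> R) : Prop :=
  (forall z, 0 <= f z) /\ measurable_fun setT f /\
  (\int[mu]_z (f z)%:E = 1)%E.

Definition is_pmf {R : realType} {Y : finType} (p : Y -> R) : Prop :=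
  (forall y, 0 <= p y) /\ \sum_(y : Y) p y = 1.

Definition PrS {R : realType} {Y : finType} (p : Y -> R) (B : {set Y}) : R :=
  \sum_(y in B) p y.

Definition condp {R : realType} {Y : finType} (p : Y -> R) (B : {set Y})
  : Y -> R := fun y => (if y \in B then p y else 0) / PrS p B.

(* density of the subsampled mechanism M = B o S at dataset x *)
Definition mdens {R : realType} {Y : finType} {T : Type}
  (b : Y -> T -> R) (sx : Y -> R) : T -> R :=
  fun z => \sum_(y : Y) b y z * sx y.

Definition is_partition {Y : finType} {n : nat} (F : 'I_n -> {set Y}) : Prop :=
  (forall i j, i != j -> [disjoint F i & F j]) /\
  \bigcup_(i < n) F i = [set: Y].

Definition is_coupling {R : realType} {Y : finType} {I J : nat}
  (p : 'I_I -> Y -> R) (q : 'I_J -> Y -> R)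
  (gamma : {ffun 'I_I -> Y} * {ffun 'I_J -> Y} -> R) : Prop :=
  is_pmf gamma /\
  (forall i y, \sum_(t : {ffun 'I_I -> Y} * {ffun 'I_J -> Y} | t.1 i == y) gamma t = p i y) /\
  (forall j y, \sum_(t : {ffun 'I_I -> Y} * {ffun 'I_J -> Y} | t.2 j == y) gamma t = q j y).

From HB Require Import structures.
From mathcomp Require Import all_boot all_order all_algebra.
From mathcomp Require Import all_classical all_reals all_analysis.
From mathcomp Require Import ring lra measurable_realfun.
Import Order.TTheory GRing.Theory Num.Theory.
Local Open Scope ring_scope.

(* Both integrands, (p, q) |-> max (p - alpha q, 0) and (p, q) |-> p^alpha q^(1-alpha),
   are positively homogeneous and subadditive on nonnegative pairs, hence satisfy
   Jensen's inequality for finite nonnegative mixtures.  Since the coupling gamma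
   has the conditional pmfs as marginals, m_x = \sum_t gamma t * P_t and
   m_x' = \sum_t gamma t * Q_t, where P_t, Q_t are the two arguments of c_alpha;
   applying Jensen pointwise and integrating term by term gives the bound. *)

Section real_inequalities.
Variable R : realType.
Implicit Types a p q u v : R.

Lemma maxr0_subadd u v : Num.max (u + v) 0 <= Num.max u 0 + Num.max v 0.
Proof.
have [hu|hu] := leP u 0; have [hv|hv] := leP v 0; have [h|h] := leP (u + v) 0;
  rewrite ?(max_r hu) ?(max_r hv) ?(max_r h);
  rewrite ?(max_l (ltW hu)) ?(max_l (ltW hv)) ?(max_l (ltW h)); lra.
Qed.

Lemma powR_perspective a p q : 0 <= p -> 0 < q ->
  p `^ a * q `^ (1 - a) = q * (p / q) `^ a.
Proof.
move=> p0 q0; have q0' := ltW q0.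
rewrite powRM ?invr_ge0 // -(powR_inv1 q0') -powRrM mulN1r.
by rewrite mulrCA powRD ?(gt_eqF q0) ?implybT // powRr1.
Qed.

(* The perspective of the convex function t |-> t^a is subadditive. *)
Lemma powR_perspective_subadd a p1 p2 q1 q2 :
  1 < a -> 0 <= p1 -> 0 <= p2 -> 0 < q1 -> 0 < q2 ->
  (p1 + p2) `^ a * (q1 + q2) `^ (1 - a) <=
  p1 `^ a * q1 `^ (1 - a) + p2 `^ a * q2 `^ (1 - a).
Proof.
move=> a1 p10 p20 q10 q20; have Q0 : 0 < q1 + q2 by lra.
rewrite !powR_perspective ?addr_ge0 //.
set w := q1 / (q1 + q2).
have w0 : 0 <= w by rewrite divr_ge0 ?ltW.
have w1 : w <= 1 by rewrite ler_pdivrMr // mul1r; lra.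
have r10 : 0 <= p1 / q1 by rewrite divr_ge0 // ltW.
have r20 : 0 <= p2 / q2 by rewrite divr_ge0 // ltW.
have -> : (p1 + p2) / (q1 + q2) = w * (p1 / q1) + (1 - w) * (p2 / q2).
  by rewrite /w; field; rewrite !lt0r_neq0.
have convex : (w * (p1 / q1) + (1 - w) * (p2 / q2)) `^ a <=
    w * (p1 / q1) `^ a + (1 - w) * (p2 / q2) `^ a.
  have := @convex_powR R a (ltW a1) (Itv01 w0 w1) (p1 / q1) (p2 / q2).
  by rewrite !convRE /=; apply; rewrite inE /= in_itv /= andbT.
apply: le_trans (ler_wpM2l (ltW Q0) convex) _.
suff -> : (q1 + q2) * (w * (p1 / q1) `^ a + (1 - w) * (p2 / q2) `^ a) =
  q1 * (p1 / q1) `^ a + q2 * (p2 / q2) `^ a by [].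
by rewrite /w; field; rewrite lt0r_neq0.
Qed.

End real_inequalities.

Section divergence_integrand.
Variable R : realType.
Implicit Types (k : divkind) (a c p q : R).
Local Open Scope ereal_scope.

Definition div_integrand k a p q : \bar R :=
  match k with
  | HS => (Num.max (p - a * q) 0)%:E
  | REN => lam_integrand a p q
  end.

Lemma PsiE d (T : measurableType d) (mu : {measure set T -> \bar R}) k a
    (p q : T -> R) :
  Psi mu k a p q = \int[mu]_z div_integrand k a (p z) (q z).
Proof. by case: k. Qed.

Lemma div_integrand00 k a : div_integrand k a 0 0 = 0.
Proof. by case: k; rewrite /= /lam_integrand ?eqxx // mulr0 subr0 maxxx. Qed.

Lemma div_integrand_ge0 k a p q : 0 <= div_integrand k a p q.
Proof.
case: k => /=; first by rewrite lee_fin le_max lexx orbT.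
rewrite /lam_integrand; case: ifP => _; first by case: ifP.
by rewrite lee_fin mulr_ge0 // powR_ge0.
Qed.

Lemma div_integrandZ k a c p q : (0 <= c)%R -> (0 <= p)%R -> (0 <= q)%R ->
  div_integrand k a (c * p) (c * q) = c%:E * div_integrand k a p q.
Proof.
move=> c0 p0 q0; case: k => /=.
  by rewrite -EFinM maxr_pMr // mulr0 mulrBr mulrCA.
have [->|cn] := eqVneq c 0%R; first by rewrite !mul0r mul0e /lam_integrand eqxx.
have cp : (0 < c)%R by rewrite lt0r cn.
rewrite /lam_integrand !mulf_eq0 (negbTE cn) /=.
case: ifP => _; last first.
  rewrite -EFinM !powRM // mulrACA -powRD ?cn ?implybT //.
  by rewrite addrC subrK powRr1 ?ltW.
by case: ifP => _; rewrite ?mule0 // gt0_muley ?lte_fin.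
Qed.

Lemma div_integrandD_le k a p1 p2 q1 q2 : alpha_ok k a ->
  (0 <= p1)%R -> (0 <= p2)%R -> (0 <= q1)%R -> (0 <= q2)%R ->
  div_integrand k a (p1 + p2) (q1 + q2) <=
  div_integrand k a p1 q1 + div_integrand k a p2 q2.
Proof.
move=> ha p10 p20 q10 q20; case: k ha => /= ha.
  by rewrite -EFinD lee_fin mulrDr opprD addrACA maxr0_subadd.
have nNy p q : div_integrand REN a p q != -oo.
  by rewrite gt_eqF // (lt_le_trans ltNy0 (div_integrand_ge0 _ _ _ _)).
have [->|q1n] := eqVneq q1 0%R.
  rewrite add0r {2}/lam_integrand eqxx.
  have [->|p1n] := eqVneq p1 0%R; first by rewrite add0r add0e.
  by rewrite addye ?leey //; apply: nNy.
have [->|q2n] := eqVneq q2 0%R.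
  rewrite addr0 {3}/lam_integrand eqxx.
  have [->|p2n] := eqVneq p2 0%R; first by rewrite addr0 adde0.
  by rewrite addey ?leey //; apply: nNy.
have q1p : (0 < q1)%R by rewrite lt0r q1n.
have q2p : (0 < q2)%R by rewrite lt0r q2n.
rewrite /lam_integrand (negbTE q1n) (negbTE q2n) gt_eqF ?addr_gt0 //.
by rewrite -EFinD lee_fin powR_perspective_subadd.
Qed.

Lemma div_integrand_sum_le k a (I : Type) (r : seq I) (P Q : I -> R) :
  alpha_ok k a -> (forall i, 0 <= P i)%R -> (forall i, 0 <= Q i)%R ->
  div_integrand k a (\sum_(i <- r) P i)%R (\sum_(i <- r) Q i)%R <=
  \sum_(i <- r) div_integrand k a (P i) (Q i).
Proof.
move=> ha P0 Q0; elim: r => [|i r IHr]; first by rewrite !big_nil div_integrand00.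
rewrite !big_cons; apply: le_trans (leeD2l _ IHr).
by apply: div_integrandD_le => //; apply: sumr_ge0.
Qed.

Lemma div_integrand_mixture_le k a (I : finType) (g P Q : I -> R) :
  alpha_ok k a ->
  (forall i, 0 <= g i)%R -> (forall i, 0 <= P i)%R -> (forall i, 0 <= Q i)%R ->
  div_integrand k a (\sum_i g i * P i)%R (\sum_i g i * Q i)%R <=
  \sum_i (g i)%:E * div_integrand k a (P i) (Q i).
Proof.
move=> ha g0 P0 Q0.
apply: le_trans (@div_integrand_sum_le k a _ _ (fun i => g i * P i)%R
  (fun i => g i * Q i)%R ha _ _) _.
- by move=> i; rewrite mulr_ge0.
- by move=> i; rewrite mulr_ge0.
by apply: lee_sum => i _; rewrite div_integrandZ.
Qed.

Lemma measurable_div_integrand d (T : measurableType d) k a (P Q : T -> R) :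
  measurable_fun setT P -> measurable_fun setT Q ->
  measurable_fun setT ((fun z => div_integrand k a (P z) (Q z)) : T -> \bar R).
Proof.
move=> mP mQ; case: k => /=.
  apply/measurable_EFinP/measurable_maxr; last exact: measurable_cst.
  by apply: measurable_funB => //; apply: measurable_funM.
apply: measurable_fun_ifT.
- exact: measurable_fun_eqr mQ (measurable_cst _).
- apply: measurable_fun_ifT => //; exact: measurable_fun_eqr mP (measurable_cst _).
apply/measurable_EFinP/measurable_funM.
  exact: measurableT_comp (measurable_powR _) mP.
exact: measurableT_comp (measurable_powR _) mQ.
Qed.

Lemma Psi_mixture_le d (T : measurableType d) (mu : {measure set T -> \bar R})
    k a (I : finType) (g : I -> R) (P Q : I -> T -> R) :
  alpha_ok k a -> (forall i, 0 <= g i)%R ->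
  (forall i z, 0 <= P i z)%R -> (forall i z, 0 <= Q i z)%R ->
  (forall i, measurable_fun setT (P i)) -> (forall i, measurable_fun setT (Q i)) ->
  Psi mu k a (fun z => \sum_i g i * P i z)%R (fun z => \sum_i g i * Q i z)%R <=
  \sum_i (g i)%:E * Psi mu k a (P i) (Q i).
Proof.
move=> ha g0 P0 Q0 mP mQ.
have mPQ i := @measurable_div_integrand d T k a _ _ (mP i) (mQ i).
have mixture_meas (F : I -> T -> R) : (forall i, measurable_fun setT (F i)) ->
    measurable_fun setT (fun z => \sum_i g i * F i z)%R.
  by move=> mF; apply: measurable_sum => i; apply: measurable_funM.
rewrite PsiE; under eq_bigr do rewrite PsiE.
have -> : \sum_i (g i)%:E * \int[mu]_z div_integrand k a (P i z) (Q i z) =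
    \int[mu]_z \sum_i (g i)%:E * div_integrand k a (P i z) (Q i z).
  rewrite ge0_integral_sum //.
  - apply: eq_bigr => i _; rewrite ge0_integralZl ?lee_fin //.
    by move=> z _; apply: div_integrand_ge0.
  - by move=> i; apply: measurable_funeM.
  - by move=> i z _; rewrite mule_ge0 ?lee_fin ?div_integrand_ge0.
apply: ge0_le_integral => //.
- by move=> z _; apply: div_integrand_ge0.
- by apply: measurable_div_integrand; apply: mixture_meas.
- by apply: emeasurable_sum => i; apply: measurable_funeM.
by move=> z _; apply: div_integrand_mixture_le.
Qed.

End divergence_integrand.

(* Summing the coupling over the coordinate [proj t i] recovers the conditional pmf
   of block [F i], and the blocks of the partition reassemble [p]. *)
Lemma mdens_coupling_mixture (R : realType) (Y I : finType) (n : nat) (Z : Type)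
    (F : 'I_n -> {set Y}) (p : Y -> R) (proj : I -> {ffun 'I_n -> Y})
    (g : I -> R) (b : Y -> Z -> R) :
  is_partition F -> (forall i, 0 < PrS p (F i)) ->
  (forall i y, \sum_(t | proj t i == y) g t = condp p (F i) y) ->
  forall z, mdens b p z = \sum_t g t * \sum_(i < n) b (proj t i) z * PrS p (F i).
Proof.
move=> [Fdisj Fcover] Fpos gmarg z; rewrite /mdens; symmetry.
under eq_bigr do rewrite big_distrr.
rewrite exchange_big /=.
transitivity (\sum_(i < n) \sum_y b y z * (if y \in F i then p y else 0)).
  apply: eq_bigr => i _.
  rewrite (partition_big (fun t => proj t i) xpredT) //=.
  apply: eq_bigr => y _.
  transitivity ((\sum_(t | proj t i == y) g t) * (b y z * PrS p (F i))).
    by rewrite big_distrl; apply: eq_bigr => t /eqP ->.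
  by rewrite gmarg /condp; field; rewrite lt0r_neq0.
rewrite exchange_big /=; apply: eq_bigr => y _; rewrite -big_distrr /=.
have /bigcupP[i0 _ yi0] : y \in \bigcup_(i < n) F i by rewrite Fcover inE.
rewrite (bigD1 i0) //= yi0 big1 ?addr0 // => j ji0.
by rewrite (disjointFl (Fdisj _ _ ji0) yi0).
Qed.

Theorem theorem3p4 (R : realType) (d : measure_display) (T : measurableType d)
  (mu : {measure set T -> \bar R}) (mu_sfin : sigma_finite setT mu)
  (Atype : finType) (Y : finType) (X : {set {set Atype}})
  (s : {set Atype} -> Y -> R) (s_pmf : forall x, x \in X -> is_pmf (s x))
  (b : Y -> T -> R) (b_dens : forall y, is_density mu (b y))
  (k : divkind) (alpha : R) (halpha : alpha_ok k alpha)
  (x x' : {set Atype}) (hx : x \in X) (hx' : x' \in X)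
  (I J : nat) (A : 'I_I -> {set Y}) (E : 'I_J -> {set Y})
  (hA : is_partition A) (hE : is_partition E)
  (hAp : forall i, 0 < PrS (s x) (A i)) (hEp : forall j, 0 < PrS (s x') (E j))
  (gamma : {ffun 'I_I -> Y} * {ffun 'I_J -> Y} -> R)
  (hgamma : is_coupling (fun i => condp (s x) (A i)) (fun j => condp (s x') (E j)) gamma) :
  (Psi mu k alpha (mdens b (s x)) (mdens b (s x')) <=
   \sum_(t : {ffun 'I_I -> Y} * {ffun 'I_J -> Y})
     (gamma t)%:E *
     Psi mu k alpha
       (fun z => (\sum_(i < I) b (t.1 i) z * PrS (s x) (A i))%R)
       (fun z => (\sum_(j < J) b (t.2 j) z * PrS (s x') (E j))%R))%E.
Proof.
have [[gamma0 _] [marg1 marg2]] := hgamma.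
have b0 y z : 0 <= b y z := (b_dens y).1 z.
have mb y : measurable_fun setT (b y) := (b_dens y).2.1.
have PrS_ge0 xx (B : {set Y}) : xx \in X -> 0 <= PrS (s xx) B.
  by move=> hxx; apply: sumr_ge0 => y _; apply: (s_pmf xx hxx).1.
have -> : mdens b (s x) = fun z => \sum_t gamma t *
    \sum_(i < I) b (t.1 i) z * PrS (s x) (A i).
  by apply: funext; apply: mdens_coupling_mixture.
have -> : mdens b (s x') = fun z => \sum_t gamma t *
    \sum_(j < J) b (t.2 j) z * PrS (s x') (E j).
  by apply: funext; apply: mdens_coupling_mixture.
apply: Psi_mixture_le => // t.
- by move=> z; apply: sumr_ge0 => i _; rewrite mulr_ge0 ?PrS_ge0.
- by move=> z; apply: sumr_ge0 => j _; rewrite mulr_ge0 ?PrS_ge0.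
- by apply: measurable_sum => i; apply: measurable_funM.
- by apply: measurable_sum => j; apply: measurable_funM.
Qed.
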